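(* Let $I\subsetneq\mathbb{N}$ be infinite, $I=I^+\sqcup I^-$ a partition, and $J=\mathbb{N}\setminus I$. For each $j\in J$ let $d_j\in E$ be a linear combination of monomials of odd length, each of which is a product of generators $e_i$ with $i\in I$ and contains an even number of factors $e_i$ with $i\in I^-$. Let $\varphi\in\mathrm{Aut}(E)$, $\varphi^2=\mathrm{id}$, be the automorphism given on generators by $\varphi(e_i)=e_i$ for $i\in I^+$, $\varphi(e_i)=-e_i$ for $i\in I^-$, and $\varphi(e_i)=-e_i+2d_i$ for $i\in J$. Then $E_\varphi$ is $\mathbb{Z}_2$-isomorphic to one of the superalgebras $E_\infty$, $E_{k^\ast}$ or $E_k$ for some $k$.
   Context: $F$ is a field of characteristic zero, $L$ an infinite-dimensional $F$-vector space with basis $e_1,e_2,\ldots$, $E$ its Grassmann algebra (basis $1$ and monomials $e_{i_1}\cdots e_{i_m}$, $i_1<\cdots<i_m$, with $e_ie_j=-e_je_i$). $E_\varphi$ is the $\mathbb{Z}_2$-grading on $E$ by eigenspaces of $\varphi$ for eigenvalues $1$ (degree 0) and $-1$ (degree 1). Homogeneous gradings: $E_k$ has $e_1,\ldots,e_k$ of degree $0$ and the other $e_i$ of degree $1$; $E_{k^\ast}$ has $e_1,\ldots,e_k$ of degree $1$ and the others of degree $0$; $E_\infty$ has $e_i$ of degree $0$ for $i$ even and $1$ for $i$ odd. Two superalgebras are $\mathbb{Z}_2$-isomorphic if there is an algebra isomorphism mapping the degree-$i$ component onto the degree-$i$ component, $i=0,1$. *)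

From HB Require Import structures.
From mathcomp Require Import all_boot all_order all_algebra.
From mathcomp Require Import finmap.
Set Implicit Arguments. Unset Strict Implicit. Unset Printing Implicit Defensive.
Import Order.TTheory GRing.Theory Num.Theory.
Local Open Scope fset_scope.
Local Open Scope ring_scope.

(* The Grassmann algebra E over F on generators e_i, i : nat (0-based:
   our e_i is the paper's e_(i+1)).  Elements are coefficient functions
   on monomials e_A (A a finite set of indices, written in increasing
   order); the ambient type [gT F] of all coefficient functions carries
   the (well-defined) exterior product, and E is the subset [gfin] of
   finitely supported functions. *)
Definition gT (F : fieldType) := {fset nat} -> F.

Section Grassmann.
Variable F : fieldType.

Definition gadd (x y : gT F) : gT F := fun A => x A + y A.
Definition gscale (c : F) (x : gT F) : gT F := fun A => c * x A.
Definition gopp (x : gT F) : gT F := gscale (-1) x.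

Definition ginv (A B : {fset nat}) : nat :=
  (\sum_(a <- A) \sum_(b <- B) (b < a)%N)%N.

(* e_A * e_B = (-1)^(ginv A B) e_(A u B) if A, B disjoint, 0 otherwise *)
Definition gmul (x y : gT F) : gT F := fun C =>
  \sum_(A <- fpowerset C) (-1) ^+ ginv A (C `\` A) * x A * y (C `\` A).

Definition gone : gT F := fun A => (A == fset0)%:R.
Definition gen (i : nat) : gT F := fun A => (A == [fset i])%:R.

Definition gfin (x : gT F) : Prop :=
  exists S : seq {fset nat}, forall A, A \notin S -> x A = 0.

Definition alg_endo (f : gT F -> gT F) : Prop :=
  [/\ forall x, gfin x -> gfin (f x),
      forall x y, gfin x -> gfin y -> f (gadd x y) = gadd (f x) (f y),
      forall c x, gfin x -> f (gscale c x) = gscale c (f x),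
      forall x y, gfin x -> gfin y -> f (gmul x y) = gmul (f x) (f y)
    & f gone = gone].

Definition alg_aut (f : gT F -> gT F) : Prop :=
  [/\ alg_endo f,
      forall x y, gfin x -> gfin y -> f x = f y -> x = y
    & forall y, gfin y -> exists2 x, gfin x & f x = y].

Definition hom_comp (deg1 : pred nat) (b : bool) (x : gT F) : Prop :=
  gfin x /\ forall A, x A != 0 -> odd #|` [fset a in A | deg1 a]| = b.

Definition phi_comp (phi : gT F -> gT F) (b : bool) (x : gT F) : Prop :=
  gfin x /\ phi x = (if b then gopp x else x).

Definition z2_maps (phi psi : gT F -> gT F) (deg1 : pred nat) : Prop :=
  (forall b x, phi_comp phi b x -> hom_comp deg1 b (psi x)) /\
  (forall b y, hom_comp deg1 b y -> exists2 x, phi_comp phi b x & psi x = y).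

Definition z2_iso (phi : gT F -> gT F) (deg1 : pred nat) : Prop :=
  exists psi, alg_aut psi /\ z2_maps phi psi deg1.

End Grassmann.

(* Homogeneous gradings (0-based indices; paper's e_m is our e_(m-1)):
   E_k    : e_1..e_k degree 0, others 1  -> our i of degree 1 iff k <= i
   E_k*   : e_1..e_k degree 1, others 0  -> our i of degree 1 iff i < k
   E_inf  : paper e_m degree 1 iff m odd  -> our i of degree 1 iff i even *)
Definition deg_Ek (k : nat) : pred nat := fun i => (k <= i)%N.
Definition deg_Ekstar (k : nat) : pred nat := fun i => (i < k)%N.
Definition deg_Einf : pred nat := fun i => ~~ odd i.

From HB Require Import structures.
From mathcomp Require Import all_boot all_order all_algebra.
From mathcomp Require Import finmap.
From mathcomp Require Import zify ring.
From Stdlib Require Import FunctionalExtensionality ClassicalEpsilon.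
Set Implicit Arguments. Unset Strict Implicit. Unset Printing Implicit Defensive.
Import Order.TTheory GRing.Theory Num.Theory.
Local Open Scope fset_scope.
Local Open Scope ring_scope.

(* Substituting e_j |-> e_j + d_j for j in J and fixing the e_i, i in I, defines an
   automorphism psi of E: the images are odd, hence anticommute and square to zero, and
   e_j |-> e_j - d_j is an inverse since d_j only involves generators from I.  Each monomial
   of d_j has an even number of factors from I-, so d_j is fixed both by phi and by the sign
   automorphism sigma that negates exactly the e_i with i in I- u J; checking generators then
   gives psi phi = sigma psi.  Thus psi is a Z2-isomorphism from E_phi onto the homogeneous
   grading with odd generators I- u J.  Up to a relabelling of the generators, a homogeneous
   grading only depends on which of its sets of even and of odd generators are finite, which
   yields E_inf, E_k* or E_k. *)

Lemma fsetUD_sub (K : choiceType) (A C : {fset K}) : A `<=` C -> A `|` (C `\` A) = C.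
Proof. by move=> sAC; rewrite fsetUDl fsetDv fsetD0; apply/fsetUidPr. Qed.

Lemma fsetUDKl (K : choiceType) (A B : {fset K}) : [disjoint A & B] -> (A `|` B) `\` A = B.
Proof. by rewrite fdisjoint_sym fsetDUl fsetDv fset0U => /fsetDidPl. Qed.

Lemma fdisjointXD (K : choiceType) (A C : {fset K}) : [disjoint A & C `\` A].
Proof. by apply/fdisjointP => x xA; rewrite !inE xA. Qed.

Lemma perm_fsetU (K : choiceType) (A B : {fset K}) : [disjoint A & B] ->
  perm_eq (A `|` B) (enum_fset A ++ enum_fset B).
Proof.
move=> /fdisjointP dAB; apply: uniq_perm; first exact: fset_uniq.
  rewrite cat_uniq !fset_uniq /= andbT; apply/hasPn => x xB /=.
  by apply/negP => /dAB; rewrite xB.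
by move=> x; rewrite mem_cat inE.
Qed.

Lemma sort_fset1U_min (b : nat) (X : {fset nat}) : (forall x, x \in X -> b < x)%N ->
  sort leq (b |` X) = b :: sort leq X.
Proof.
move=> hX; apply: (sorted_eq leq_trans anti_leq).
- exact: sort_sorted leq_total _.
- rewrite /= path_sortedE; last exact: leq_trans.
  rewrite sort_sorted ?andbT; last exact: leq_total.
  by apply/allP => x; rewrite mem_sort => /hX /ltnW.
apply: uniq_perm.
- by rewrite sort_uniq fset_uniq.
- rewrite /= sort_uniq fset_uniq andbT mem_sort; apply/negP => /hX.
  by rewrite ltnn.
by move=> x; rewrite in_cons !mem_sort !inE.
Qed.

Lemma fset_ind_min (P : {fset nat} -> Prop) : P fset0 ->
  (forall b X, (forall x, x \in X -> b < x)%N -> P X -> P (b |` X)) ->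
  forall A, P A.
Proof.
move=> P0 PS A; move: {2}(sort leq A) (erefl (sort leq A)) => l.
elim: l A => [|b l IH] A eA.
  suff -> : A = fset0 by [].
  by apply/eqP; rewrite -cardfs_eq0 -(size_sort leq) eA.
have bA : b \in A by rewrite -(mem_sort leq) eA inE eqxx.
have sl : sorted leq (b :: l) by rewrite -eA; exact: (sort_sorted leq_total).
have hX : forall x, x \in A `\ b -> (b < x)%N.
  move=> x; rewrite !inE => /andP [nxb xA].
  have : x \in l by move: xA; rewrite -(mem_sort leq) eA inE (negbTE nxb).
  move: sl; rewrite /= path_sortedE; last exact: leq_trans.
  by case/andP => /allP h _ /h; rewrite leq_eqVlt eq_sym (negbTE nxb).
rewrite -(fsetD1K bA); apply: PS => //; apply: IH.
by have := sort_fset1U_min hX; rewrite fsetD1K // eA => -[].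
Qed.

Definition nbelow (R : pred nat) (i : nat) := count R (iota 0 i).

Lemma nbelowS (R : pred nat) i : nbelow R i.+1 = (nbelow R i + R i)%N.
Proof. by rewrite /nbelow -addn1 iotaD count_cat /= add0n addn0. Qed.

Lemma leq_nbelow (R : pred nat) i j : (i <= j)%N -> (nbelow R i <= nbelow R j)%N.
Proof. by move/subnKC => <-; rewrite /nbelow iotaD count_cat leq_addr. Qed.

Lemma nbelow_inj (R : pred nat) i j : R i -> R j -> nbelow R i = nbelow R j -> i = j.
Proof.
move=> Ri Rj e; case: (ltngtP i j) => // h.
  by have := leq_nbelow R h; rewrite nbelowS Ri -e addn1 ltnn.
by have := leq_nbelow R h; rewrite nbelowS Rj e addn1 ltnn.
Qed.

Definition has_more (R : pred nat) (n : nat) := exists i, (n < nbelow R i)%N.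

Lemma nbelow_onto (R : pred nat) n : has_more R n -> exists2 i, R i & nbelow R i = n.
Proof.
case/ex_minnP => -[|m]; first by rewrite /nbelow.
rewrite nbelowS => hm hmin; have : ~~ (n < nbelow R m)%N by apply/negP => /hmin; lia.
by case: (boolP (R m)) hm => Rm /=; [exists m => //; lia | lia].
Qed.

Definition relabelling (P Q : pred nat) :=
  exists s t : nat -> nat, [/\ cancel s t, cancel t s & forall i, Q (s i) = P i].

(* i is matched with the letter m of the same colour having the same rank in its colour. *)
Definition rank_match (P Q : pred nat) (i m : nat) :=
  (Q m == P i) && (nbelow (fun k => Q k == P i) m == nbelow (fun k => P k == P i) i).

Lemma rank_match_exists (P Q : pred nat) :
  (forall b n, has_more (fun k => P k == b) n -> has_more (fun k => Q k == b) n) ->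
  forall i, exists m, rank_match P Q i m.
Proof.
move=> PQ i; have [m /eqP QmPi em] : exists2 m, Q m == P i &
    nbelow (fun k => Q k == P i) m = nbelow (fun k => P k == P i) i.
  by apply/nbelow_onto/PQ; exists i.+1; rewrite nbelowS eqxx addn1.
by exists m; rewrite /rank_match QmPi em !eqxx.
Qed.

Lemma rank_match_cancel (P Q : pred nat) (s t : nat -> nat) :
  (forall i, rank_match P Q i (s i)) -> (forall m, rank_match Q P m (t m)) -> cancel s t.
Proof.
move=> hs ht i; move: (hs i) (ht (s i)) => /andP [/eqP e1 /eqP e2] /andP [/eqP e3 /eqP e4].
rewrite e1 in e3 e4; rewrite e2 in e4.
by apply: (@nbelow_inj (fun k => P k == P i)); rewrite /= ?e3 ?eqxx.
Qed.

Lemma relabelling_of_sizes (P Q : pred nat) :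
  (forall b n, has_more (fun k => P k == b) n <-> has_more (fun k => Q k == b) n) ->
  relabelling P Q.
Proof.
move=> same_sizes.
have ms := rank_match_exists (fun b n => (same_sizes b n).1).
have mt := rank_match_exists (fun b n => (same_sizes b n).2).
exists (fun i => xchoose (ms i)), (fun m => xchoose (mt m)); split.
- by apply: (@rank_match_cancel P Q) => i; apply: xchooseP.
- by apply: (@rank_match_cancel Q P) => i; apply: xchooseP.
- by move=> i; have /andP [/eqP -> _] := xchooseP (ms i).
Qed.

Definition unbounded (R : pred nat) := forall N, exists2 i, (N <= i)%N & R i.
Definition bounded_by (R : pred nat) N := forall i, (N <= i)%N -> ~~ R i.

Lemma has_more_unbounded (R : pred nat) n : unbounded R -> has_more R n.
Proof.
move=> uR; elim: n => [|n [i hi]].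
  by have [i _ Ri] := uR 0%N; exists i.+1; rewrite nbelowS Ri addn1.
have [j ij Rj] := uR i; exists j.+1; rewrite nbelowS Rj.
by have := leq_nbelow R ij; lia.
Qed.

Lemma has_moreE_bounded (R : pred nat) N n : bounded_by R N ->
  has_more R n <-> (n < nbelow R N)%N.
Proof.
move=> bR; split=> [[i ni]|]; last by exists N.
apply: (leq_trans ni); case: (leqP i N) => [/leq_nbelow //|/ltnW/subnKC <-].
rewrite /nbelow iotaD count_cat add0n.
suff -> : count R (iota N (i - N)) = 0%N by rewrite addn0.
rewrite (@eq_in_count _ _ pred0) ?count_pred0 // => x.
by rewrite mem_iota => /andP [/bR /negbTE].
Qed.

Lemma unbounded_or_bounded (R : pred nat) : unbounded R \/ exists N, bounded_by R N.
Proof.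
case: (classic (exists N, bounded_by R N)) => [|nbR]; [by right | left] => N.
case: (classic (exists2 i, (N <= i)%N & R i)) => // nR; case: nbR; exists N => i Ni.
by apply/negP => Ri; apply: nR; exists i.
Qed.

Lemma has_moreE_initial (R : pred nat) K n :
  (forall i, R i = (i < K)%N) -> has_more R n <-> (n < K)%N.
Proof.
move=> RK; rewrite (@has_moreE_bounded _ K) => [|i]; last by rewrite RK -leqNgt.
rewrite /nbelow (@eq_in_count _ _ predT) ?count_predT ?size_iota //.
by move=> x; rewrite mem_iota add0n RK => /andP [].
Qed.

Lemma relabelling_Einf (P : pred nat) :
  unbounded (fun k => P k == true) -> unbounded (fun k => P k == false) ->
  relabelling P deg_Einf.
Proof.
move=> uT uF; apply: relabelling_of_sizes => -[] n; split=> _;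
  apply: has_more_unbounded => // M.
- by exists M.*2; [lia | rewrite /deg_Einf odd_double].
- by exists M.*2.+1; [lia | rewrite /deg_Einf /= odd_double].
Qed.

Lemma relabelling_Ek (P : pred nat) N :
  unbounded (fun k => P k == true) -> bounded_by (fun k => P k == false) N ->
  relabelling P (deg_Ek (nbelow (fun k => P k == false) N)).
Proof.
set K := nbelow _ N => uT bF; apply: relabelling_of_sizes => -[] n.
  split=> _; apply: has_more_unbounded => // M.
  by exists (M + K)%N; rewrite /deg_Ek; lia.
rewrite (has_moreE_bounded _ bF) (@has_moreE_initial _ K) // => i.
by rewrite /deg_Ek; lia.
Qed.

Lemma relabelling_Ekstar (P : pred nat) N :
  unbounded (fun k => P k == false) -> bounded_by (fun k => P k == true) N ->
  relabelling P (deg_Ekstar (nbelow (fun k => P k == true) N)).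
Proof.
set K := nbelow _ N => uF bT; apply: relabelling_of_sizes => -[] n; last first.
  split=> _; apply: has_more_unbounded => // M.
  by exists (M + K)%N; rewrite /deg_Ekstar; lia.
by rewrite (has_moreE_bounded _ bT) (@has_moreE_initial _ K).
Qed.

Lemma relabelling_standard (P : pred nat) :
  relabelling P deg_Einf \/ (exists k, relabelling P (deg_Ekstar k))
  \/ (exists k, relabelling P (deg_Ek k)).
Proof.
have [uT|[N bT]] := unbounded_or_bounded (fun k => P k == true).
  have [uF|[N bF]] := unbounded_or_bounded (fun k => P k == false).
    by left; apply: relabelling_Einf.
  by right; right; eexists; apply: relabelling_Ek bF.
have uF : unbounded (fun k => P k == false).
  move=> M; exists (maxn M N); first exact: leq_maxl.
  by have := bT (maxn M N) (leq_maxr _ _); case: (P _).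
by right; left; eexists; apply: relabelling_Ekstar bT.
Qed.

Section Grassmann.
Variable F : fieldType.
Local Notation gT := (gT F).
Local Notation gmul := (@gmul F).
Local Notation gadd := (@gadd F).
Local Notation gscale := (@gscale F).

Definition gmon (A : {fset nat}) : gT := fun C => (C == A)%:R.
Definition gzero : gT := fun _ => 0.
Definition gsum (I : Type) (s : seq I) (f : I -> gT) : gT :=
  fun C => \sum_(i <- s) f i C.

Definition gsupported (S : seq {fset nat}) (x : gT) := forall A, A \notin S -> x A = 0.
Definition glin (f : {fset nat} -> gT) (S : seq {fset nat}) (x : gT) :=
  gsum S (fun A => gscale (x A) (f A)).

Lemma gmon1 i : gmon [fset i] = gen F i. Proof. by []. Qed.
Lemma gmon0 : gmon fset0 = gone F. Proof. by []. Qed.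

Lemma gfin_supported x : gfin x -> exists2 S, uniq S & gsupported S x.
Proof.
case=> S hS; exists (undup S); first exact: undup_uniq.
by move=> A; rewrite mem_undup; apply: hS.
Qed.

Lemma glin_monE S x : uniq S -> gsupported S x -> x = glin gmon S x.
Proof.
move=> uS cS; apply: functional_extensionality => C.
rewrite /glin /gsum /gscale /gmon; case: (boolP (C \in S)) => CS.
  rewrite (bigD1_seq C) //= eqxx mulr1 big1 ?addr0 // => A nA.
  by rewrite eq_sym (negbTE nA) mulr0.
rewrite cS // big1_seq // => A /andP [_ AS].
by case: (eqVneq C A) => [eCA|_]; [rewrite eCA AS in CS | rewrite mulr0].
Qed.

Lemma eq_gsum (I : Type) (s : seq I) (f g : I -> gT) :
  (forall i, f i = g i) -> gsum s f = gsum s g.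
Proof.
by move=> e; apply: functional_extensionality => C; apply: eq_bigr => i _; rewrite e.
Qed.

Lemma gsum_nil (I : Type) f : gsum (@nil I) f = gzero.
Proof. by apply: functional_extensionality => C; rewrite /gsum big_nil. Qed.

Lemma gsum_cons (I : Type) (i : I) s f : gsum (i :: s) f = gadd (f i) (gsum s f).
Proof. by apply: functional_extensionality => C; rewrite /gsum big_cons. Qed.

Lemma exchange_gsum (S T : seq {fset nat}) (f : {fset nat} -> {fset nat} -> gT) :
  gsum S (fun A => gsum T (f A)) = gsum T (fun B => gsum S (fun A => f A B)).
Proof. by apply: functional_extensionality => C; rewrite /gsum exchange_big. Qed.

Lemma gscale_sum c (I : Type) (s : seq I) f :
  gscale c (gsum s f) = gsum s (fun i => gscale c (f i)).
Proof. by apply: functional_extensionality => C; rewrite /gscale /gsum mulr_sumr. Qed.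

Lemma gscaleA c c' x : gscale c (gscale c' x) = gscale (c * c') x.
Proof. by apply: functional_extensionality => C; rewrite /gscale mulrA. Qed.

Lemma gscale1 x : gscale 1 x = x.
Proof. by apply: functional_extensionality => C; rewrite /gscale mul1r. Qed.

Lemma gscale0 x : gscale 0 x = gzero.
Proof. by apply: functional_extensionality => C; rewrite /gscale mul0r. Qed.

Lemma gscaler0 c : gscale c gzero = gzero.
Proof. by apply: functional_extensionality => C; rewrite /gscale mulr0. Qed.

Lemma gfin0 : gfin gzero. Proof. by exists [::]. Qed.

Lemma gfin_mon A : gfin (gmon A).
Proof. by exists [:: A] => C; rewrite inE /gmon => /negbTE ->. Qed.

Lemma gfin_gen i : gfin (gen F i). Proof. exact: gfin_mon. Qed.

Lemma gfin_add x y : gfin x -> gfin y -> gfin (gadd x y).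
Proof.
case=> S hS [T hT]; exists (S ++ T) => A; rewrite mem_cat negb_or => /andP [aS aT].
by rewrite /gadd hS // hT // addr0.
Qed.

Lemma gfin_scale c x : gfin x -> gfin (gscale c x).
Proof. by case=> S hS; exists S => A aS; rewrite /gscale hS // mulr0. Qed.

Lemma gfin_sum (I : Type) (s : seq I) f : (forall i, gfin (f i)) -> gfin (gsum s f).
Proof.
move=> h; elim: s => [|i s IH]; first by rewrite gsum_nil; exact: gfin0.
by rewrite gsum_cons; apply: gfin_add.
Qed.

Lemma gmul_monl A y C : gmul (gmon A) y C =
  if A `<=` C then (-1) ^+ ginv A (C `\` A) * y (C `\` A) else 0.
Proof.
rewrite /gmul; case: ifP => sAC.
  rewrite (bigD1_seq A) /= ?fpowersetE ?fset_uniq // /gmon eqxx mulr1.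
  by rewrite big1 ?addr0 // => B /negbTE ->; rewrite mulr0 mul0r.
rewrite big_seq big1 // => B; rewrite fpowersetE /gmon => sBC.
by case: eqP => [eBA|]; [rewrite eBA sAC in sBC | rewrite mulr0 mul0r].
Qed.

Lemma gmul_monr x B C : gmul x (gmon B) C =
  if B `<=` C then (-1) ^+ ginv (C `\` B) B * x (C `\` B) else 0.
Proof.
rewrite /gmul; case: ifP => sBC.
  rewrite (bigD1_seq (C `\` B)) /= ?fpowersetE ?fset_uniq ?fsubsetDl //.
  rewrite fsetDK // /gmon eqxx mulr1 big_seq_cond big1 ?addr0 // => A.
  rewrite fpowersetE => /andP [sAC nA].
  case: eqP => [eA|]; last by rewrite mulr0.
  by rewrite -eA fsetDK // eqxx in nA.
rewrite big_seq big1 // => A; rewrite fpowersetE /gmon => sAC.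
case: eqP => [eA|]; last by rewrite mulr0.
by rewrite -eA fsubsetDl in sBC.
Qed.

Lemma gmul_mon A B : gmul (gmon A) (gmon B) =
  if [disjoint A & B]%fset then gscale ((-1) ^+ ginv A B) (gmon (A `|` B)) else gzero.
Proof.
apply: functional_extensionality => C; rewrite gmul_monl /gscale /gmon /gzero.
case: (boolP [disjoint A & B]%fset) => dAB.
  case: (eqVneq C (A `|` B)) => [->|nC]; first by rewrite fsubsetUl fsetUDKl // eqxx.
  case: ifP => sAC; last by rewrite mulr0.
  case: (eqVneq (C `\` A) B) => [eB|nB]; last by rewrite !mulr0.
  by rewrite -eB fsetUD_sub // eqxx in nC.
case: ifP => // sAC; case: (eqVneq (C `\` A) B) => [eB|nB]; last by rewrite !mulr0.
by rewrite -eB fdisjointXD in dAB.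
Qed.

Lemma gmul_suml (I : Type) (s : seq I) (f : I -> gT) y :
  gmul (gsum s f) y = gsum s (fun i => gmul (f i) y).
Proof.
apply: functional_extensionality => C; rewrite /gmul /gsum exchange_big.
by apply: eq_bigr => A _; rewrite mulr_sumr big_distrl.
Qed.

Lemma gmul_sumr (I : Type) (s : seq I) (f : I -> gT) x :
  gmul x (gsum s f) = gsum s (fun i => gmul x (f i)).
Proof.
apply: functional_extensionality => C; rewrite /gmul /gsum exchange_big.
by apply: eq_bigr => A _; rewrite mulr_sumr.
Qed.

Lemma gmul_scalel c x y : gmul (gscale c x) y = gscale c (gmul x y).
Proof.
apply: functional_extensionality => C; rewrite /gmul /gscale mulr_sumr.
by apply: eq_bigr => A _; rewrite !mulrA [_ * c]mulrC.
Qed.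

Lemma gmul_scaler c x y : gmul x (gscale c y) = gscale c (gmul x y).
Proof.
apply: functional_extensionality => C; rewrite /gmul /gscale mulr_sumr.
by apply: eq_bigr => A _; rewrite mulrA [_ * c]mulrC !mulrA.
Qed.

Lemma gmul0l y : gmul gzero y = gzero.
Proof.
apply: functional_extensionality => C.
by rewrite /gmul /gzero big1 // => A _; rewrite mulr0 mul0r.
Qed.

Lemma gmul0r x : gmul x gzero = gzero.
Proof.
apply: functional_extensionality => C.
by rewrite /gmul /gzero big1 // => A _; rewrite mulr0.
Qed.

Lemma gmul1l x : gmul (gone F) x = x.
Proof.
apply: functional_extensionality => C; rewrite -gmon0.
by rewrite gmul_monl fsub0set fsetD0 /ginv big_seq_fset0 expr0 mul1r.
Qed.

Lemma gmul1r x : gmul x (gone F) = x.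
Proof.
apply: functional_extensionality => C; rewrite -gmon0.
rewrite gmul_monr fsub0set fsetD0 /ginv big1 ?expr0 ?mul1r // => a _.
by rewrite big_seq_fset0.
Qed.

Lemma gmul_glin f h S T x y : gmul (glin f S x) (glin h T y) =
  gsum S (fun A => gsum T (fun B => gscale (x A * y B) (gmul (f A) (h B)))).
Proof.
rewrite /glin gmul_suml; apply: eq_gsum => A.
rewrite gmul_scalel gmul_sumr gscale_sum; apply: eq_gsum => B.
by rewrite gmul_scaler gscaleA.
Qed.

Lemma gfin_mul x y : gfin x -> gfin y -> gfin (gmul x y).
Proof.
move=> /gfin_supported [S uS cS] /gfin_supported [T uT cT].
rewrite (glin_monE uS cS) (glin_monE uT cT) gmul_glin.
apply: gfin_sum => A; apply: gfin_sum => B; apply: gfin_scale.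
by rewrite gmul_mon; case: ifP => _; [apply/gfin_scale/gfin_mon | exact: gfin0].
Qed.

Lemma ginvUl A B C :
  [disjoint A & B]%fset -> ginv (A `|` B) C = (ginv A C + ginv B C)%N.
Proof. by move=> dAB; rewrite /ginv (perm_big _ (perm_fsetU dAB)) big_cat. Qed.

Lemma ginvUr A B C :
  [disjoint B & C]%fset -> ginv A (B `|` C) = (ginv A B + ginv A C)%N.
Proof.
move=> dBC; rewrite /ginv -big_split /=; apply: eq_bigr => a _.
by rewrite (perm_big _ (perm_fsetU dBC)) big_cat.
Qed.

Lemma gmul_monA A B C :
  gmul (gmul (gmon A) (gmon B)) (gmon C) = gmul (gmon A) (gmul (gmon B) (gmon C)).
Proof.
rewrite !gmul_mon.
have [dAB|dAB] := boolP [disjoint A & B]%fset;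
  have [dBC|dBC] := boolP [disjoint B & C]%fset;
  rewrite ?gmul_scalel ?gmul_scaler ?gmul0l ?gmul0r ?gmul_mon //.
- rewrite fdisjointUX fdisjointXU dAB dBC andbT /= fsetUA.
  case: (boolP [disjoint A & C]%fset) => dAC /=; last first.
    by apply: functional_extensionality => D; rewrite /gscale /gzero !mulr0.
  rewrite !gscaleA -!exprD ginvUl // ginvUr //; congr (gscale (_ ^+ _) _); lia.
- by rewrite fdisjointUX (negbTE dBC) andbF gscaler0.
- by rewrite fdisjointXU (negbTE dAB) gscaler0.
Qed.

Lemma gmulA_mon2 A B z : gfin z ->
  gmul (gmul (gmon A) (gmon B)) z = gmul (gmon A) (gmul (gmon B) z).
Proof.
move=> /gfin_supported [S uS cS]; rewrite (glin_monE uS cS) /glin !gmul_sumr.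
by apply: eq_gsum => C; rewrite !gmul_scaler gmul_monA.
Qed.

Lemma gmulA_mon A y z : gfin y -> gfin z ->
  gmul (gmul (gmon A) y) z = gmul (gmon A) (gmul y z).
Proof.
move=> /gfin_supported [S uS cS] fz; rewrite (glin_monE uS cS) /glin.
rewrite gmul_sumr !gmul_suml gmul_sumr; apply: eq_gsum => B.
by rewrite gmul_scaler !gmul_scalel gmul_scaler gmulA_mon2.
Qed.

Lemma gmulA x y z : gfin x -> gfin y -> gfin z ->
  gmul (gmul x y) z = gmul x (gmul y z).
Proof.
move=> /gfin_supported [S uS cS] fy fz; rewrite (glin_monE uS cS) /glin !gmul_suml.
by apply: eq_gsum => A; rewrite !gmul_scalel gmulA_mon.
Qed.

Lemma ginv_swap A B : [disjoint A & B]%fset ->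
  (ginv A B + ginv B A = #|` A| * #|` B|)%N.
Proof.
move=> /fdisjointP dAB; rewrite /ginv [X in (_ + X)%N]exchange_big -big_split /=.
rewrite card_fset_sum1 big_distrl /= !big_seq; apply: eq_bigr => a aA.
rewrite -big_split card_fset_sum1 mul1n !big_seq; apply: eq_bigr => b bB /=.
have nab : a != b by apply: contraNneq (dAB a aA) => ->.
by case: ltngtP nab.
Qed.

Lemma gmul_monC A B : gmul (gmon A) (gmon B) =
  gscale ((-1) ^+ (#|` A| * #|` B|)) (gmul (gmon B) (gmon A)).
Proof.
rewrite !gmul_mon [[disjoint B & A]%fset]fdisjoint_sym.
case: ifP => dAB; last by rewrite gscaler0.
rewrite [B `|` A]fsetUC gscaleA -exprD -(ginv_swap dAB) -addnA; congr gscale.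
by rewrite -[LHS]signr_odd -[RHS]signr_odd !oddD addbb addbF.
Qed.

Definition godd (x : gT) := gfin x /\ forall A, x A != 0 -> odd #|` A|.

Lemma godd_scale c x : godd x -> godd (gscale c x).
Proof.
case=> fx ox; split; first exact: gfin_scale.
by move=> A; rewrite /gscale mulf_eq0 negb_or => /andP [_ /ox].
Qed.

Lemma godd_add x y : godd x -> godd y -> godd (gadd x y).
Proof.
case=> fx ox [fy oy]; split; first exact: gfin_add.
move=> A; rewrite /gadd; case: (eqVneq (x A) 0) => [->|/ox //].
by rewrite add0r => /oy.
Qed.

Lemma godd_gen i : godd (gen F i).
Proof.
split=> [|A]; first exact: gfin_gen.
by rewrite /gen; case: (eqVneq A [fset i]) => [->|]; rewrite ?cardfs1 ?eqxx.
Qed.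

Lemma gmul_oddC x y : godd x -> godd y -> gmul x y = gopp (gmul y x).
Proof.
move=> [/gfin_supported [S uS cS] ox] [/gfin_supported [T uT cT] oy].
rewrite {1 2}(glin_monE uS cS) {1 2}(glin_monE uT cT) !gmul_glin /gopp gscale_sum.
under [RHS]eq_gsum => B do rewrite gscale_sum.
rewrite [RHS]exchange_gsum; apply: eq_gsum => A; apply: eq_gsum => B.
rewrite gscaleA.
case: (eqVneq (x A) 0) => [->|xA]; first by rewrite !(mul0r, mulr0) !gscale0.
case: (eqVneq (y B) 0) => [->|yB]; first by rewrite !(mul0r, mulr0) !gscale0.
rewrite gmul_monC gscaleA -signr_odd oddM (ox _ xA) (oy _ yB).
by rewrite expr1 mulrN1 mulN1r mulrC.
Qed.

Definition gmonomial (g : nat -> gT) (A : {fset nat}) : gT :=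
  foldr (fun a acc => gmul (g a) acc) (gone F) (sort leq A).

Lemma gmonomial0 g : gmonomial g fset0 = gone F.
Proof.
by rewrite /gmonomial (_ : sort leq _ = [::]) //; apply: size0nil; rewrite size_sort.
Qed.

Lemma gmonomial_fset1U_min g b X : (forall x, x \in X -> b < x)%N ->
  gmonomial g (b |` X) = gmul (g b) (gmonomial g X).
Proof. by move=> hX; rewrite /gmonomial sort_fset1U_min. Qed.

Lemma gmonomial1 g i : gmonomial g [fset i] = g i.
Proof.
by rewrite -[[fset i]]fsetU0 gmonomial_fset1U_min ?gmonomial0 ?gmul1r.
Qed.

Lemma eq_gmonomial (g h : nat -> gT) (A : {fset nat}) :
  {in A, g =1 h} -> gmonomial g A = gmonomial h A.
Proof.
move=> gh; rewrite /gmonomial.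
have : all (mem A) (sort leq A) by apply/allP => a; rewrite mem_sort.
by elim: (sort leq A) => //= a l IH /andP [aA /IH ->]; rewrite gh.
Qed.

Lemma gfin_gmonomial g A : (forall i, gfin (g i)) -> gfin (gmonomial g A).
Proof.
move=> hg; rewrite /gmonomial; elim: (sort _ _) => [|a l IH] /=; last exact: gfin_mul.
exact: gfin_mon.
Qed.

Lemma ginv0l B : ginv fset0 B = 0%N.
Proof. by rewrite /ginv big_seq_fset0. Qed.

Lemma ginv11 a b : ginv [fset a] [fset b] = (b < a)%N.
Proof. by rewrite /ginv !big_seq_fset1. Qed.

Lemma ginv1_min a (X : {fset nat}) :
  (forall x, x \in X -> a < x)%N -> ginv [fset a] X = 0%N.
Proof.
move=> hX; rewrite /ginv big_seq_fset1 big_seq big1 // => x /hX.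
by rewrite ltnNge => /negbTE; rewrite leq_eqVlt => /norP [_ /negbTE ->].
Qed.

Lemma min_notin a (X : {fset nat}) : (forall x, x \in X -> a < x)%N -> a \notin X.
Proof. by move=> hX; apply/negP => /hX; rewrite ltnn. Qed.

Lemma gmonomial_gen A : gmonomial (gen F) A = gmon A.
Proof.
elim/fset_ind_min: A => [|b X hX IH]; first by rewrite gmonomial0.
rewrite gmonomial_fset1U_min // IH -gmon1 gmul_mon fdisjoint1X min_notin //.
by rewrite ginv1_min // expr0 gscale1.
Qed.

Definition gsupp (x : gT) : seq {fset nat} :=
  match excluded_middle_informative (gfin x) with
  | left fx => undup (proj1_sig (constructive_indefinite_description _ fx))
  | right _ => [::]
  end.

Lemma gsupp_uniq x : uniq (gsupp x).
Proof. by rewrite /gsupp; case: excluded_middle_informative => // ?; exact: undup_uniq. Qed.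

Lemma gsupported_gsupp x : gfin x -> gsupported (gsupp x) x.
Proof.
rewrite /gsupp; case: excluded_middle_informative => // fx _.
by case: constructive_indefinite_description => S hS /= A; rewrite mem_undup; exact: hS.
Qed.

Lemma glin_supported_eq f S T x : uniq S -> uniq T ->
  gsupported S x -> gsupported T x -> glin f S x = glin f T x.
Proof.
have glin_filter U C : glin f U x C = \sum_(A <- [seq A <- U | x A != 0]) x A * f A C.
  rewrite /glin /gsum /gscale big_filter [LHS](bigID (fun A => x A != 0)) /=.
  by rewrite [X in _ + X]big1 ?addr0 // => A /negPn /eqP ->; rewrite mul0r.
move=> uS uT cS cT; apply: functional_extensionality => C.
rewrite !glin_filter; apply/perm_big/uniq_perm; rewrite ?filter_uniq // => A.
rewrite !mem_filter; case: (eqVneq (x A) 0) => //= xA.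
case: (boolP (A \in S)) => AS; case: (boolP (A \in T)) => AT //.
  by rewrite cT ?eqxx in xA.
by rewrite cS ?eqxx in xA.
Qed.

Definition gsubst (g : nat -> gT) (x : gT) : gT := glin (gmonomial g) (gsupp x) x.

Lemma gsubstE g S x : uniq S -> gsupported S x -> gsubst g x = glin (gmonomial g) S x.
Proof.
move=> uS cS; apply: glin_supported_eq => //; first exact: gsupp_uniq.
by apply: gsupported_gsupp; exists S.
Qed.

Lemma gsupported_add S x y : gsupported S x -> gsupported S y -> gsupported S (gadd x y).
Proof. by move=> cx cy A AS; rewrite /gadd cx // cy // addr0. Qed.

Lemma gsupported_scale S c x : gsupported S x -> gsupported S (gscale c x).
Proof. by move=> cx A AS; rewrite /gscale cx // mulr0. Qed.

Lemma gsubst_add g x y :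
  gfin x -> gfin y -> gsubst g (gadd x y) = gadd (gsubst g x) (gsubst g y).
Proof.
move=> fx fy; set S := undup (gsupp x ++ gsupp y).
have uS : uniq S by apply: undup_uniq.
have cx : gsupported S x.
  by move=> A; rewrite mem_undup mem_cat negb_or => /andP [+ _]; apply: gsupported_gsupp.
have cy : gsupported S y.
  by move=> A; rewrite mem_undup mem_cat negb_or => /andP [_]; apply: gsupported_gsupp.
rewrite !(gsubstE _ uS) //; last exact: gsupported_add.
apply: functional_extensionality => C.
by rewrite /glin /gsum /gadd /gscale -big_split; apply: eq_bigr => A _; rewrite mulrDl.
Qed.

Lemma gsubst_scale g c x : gfin x -> gsubst g (gscale c x) = gscale c (gsubst g x).
Proof.
move=> fx; have cx := gsupported_gsupp fx.
rewrite (gsubstE _ (gsupp_uniq x) (gsupported_scale c cx)) /gsubst /glin gscale_sum.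
by apply: eq_gsum => A; rewrite gscaleA.
Qed.

Lemma gsubst_zero g : gsubst g gzero = gzero.
Proof. by rewrite (@gsubstE _ [::]) // /glin gsum_nil. Qed.

Lemma gsubst_mon g A : gsubst g (gmon A) = gmonomial g A.
Proof.
rewrite (@gsubstE _ [:: A]) //; last by move=> B; rewrite inE /gmon => /negbTE ->.
apply: functional_extensionality => C.
by rewrite /glin gsum_cons gsum_nil /gmon eqxx gscale1 /gadd /gzero addr0.
Qed.

Lemma gsubst_gen g i : gsubst g (gen F i) = g i.
Proof. by rewrite -gmon1 gsubst_mon gmonomial1. Qed.

Lemma gsubst_one g : gsubst g (gone F) = gone F.
Proof. by rewrite -gmon0 gsubst_mon gmonomial0. Qed.

Lemma gsubst_sum g (I : Type) (s : seq I) f : (forall i, gfin (f i)) ->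
  gsubst g (gsum s f) = gsum s (fun i => gsubst g (f i)).
Proof.
move=> hf; elim: s => [|i s IH]; first by rewrite !gsum_nil gsubst_zero.
by rewrite !gsum_cons gsubst_add ?IH //; apply: gfin_sum.
Qed.

Lemma gfin_gsubst g x : (forall i, gfin (g i)) -> gfin (gsubst g x).
Proof. by move=> hg; apply: gfin_sum => A; apply/gfin_scale/gfin_gmonomial. Qed.

Lemma alg_endo0 (f : gT -> gT) : alg_endo f -> f gzero = gzero.
Proof. by case=> _ _ fZ _ _; rewrite -(gscale0 gzero) fZ ?gscale0 //; exact: gfin0. Qed.

Lemma alg_endo_sum (f : gT -> gT) (I : Type) (s : seq I) (h : I -> gT) :
  alg_endo f -> (forall i, gfin (h i)) -> f (gsum s h) = gsum s (fun i => f (h i)).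
Proof.
move=> ef fh; elim: s => [|i s IH]; first by rewrite !gsum_nil alg_endo0.
by case: ef => _ fD _ _ _; rewrite !gsum_cons fD ?IH //; apply: gfin_sum.
Qed.

Lemma alg_endo_gmonomial (f : gT -> gT) (g : nat -> gT) A :
  alg_endo f -> (forall i, gfin (g i)) ->
  f (gmonomial g A) = gmonomial (fun i => f (g i)) A.
Proof.
move=> ef fg; elim/fset_ind_min: A => [|b X hX IH]; first by rewrite !gmonomial0; case: ef.
case: ef => _ _ _ fM _; rewrite !gmonomial_fset1U_min // fM ?IH //.
exact: gfin_gmonomial.
Qed.

Lemma alg_endoE (f : gT -> gT) x :
  alg_endo f -> gfin x -> f x = gsubst (fun i => f (gen F i)) x.
Proof.
move=> ef fx; have [S uS cS] := gfin_supported fx.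
rewrite (gsubstE _ uS cS) {1}(glin_monE uS cS) /glin alg_endo_sum //; last first.
  by move=> A; apply/gfin_scale/gfin_mon.
apply: eq_gsum => A; case: (ef) => _ _ fZ _ _; rewrite fZ; last exact: gfin_mon.
by rewrite -gmonomial_gen alg_endo_gmonomial //; exact: gfin_gen.
Qed.

Lemma eq_alg_endo (f1 f2 : gT -> gT) : alg_endo f1 -> alg_endo f2 ->
  (forall i, f1 (gen F i) = f2 (gen F i)) -> forall x, gfin x -> f1 x = f2 x.
Proof.
move=> e1 e2 e12 x fx; rewrite (alg_endoE e1 fx) (alg_endoE e2 fx).
by congr gsubst; apply: functional_extensionality.
Qed.

Lemma alg_endo_comp (f h : gT -> gT) : alg_endo f -> alg_endo h -> alg_endo (f \o h).
Proof.
case=> f1 f2 f3 f4 f5 [h1 h2 h3 h4 h5]; split => /=.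
- by move=> x fx; apply/f1/h1.
- by move=> x y fx fy; rewrite h2 // f2 //; apply: h1.
- by move=> c x fx; rewrite h3 // f3 //; apply: h1.
- by move=> x y fx fy; rewrite h4 // f4 //; apply: h1.
- by rewrite h5 f5.
Qed.

Lemma alg_aut_comp (f h : gT -> gT) : alg_aut f -> alg_aut h -> alg_aut (f \o h).
Proof.
case=> ef fI fS [eh hI hS]; split; first exact: alg_endo_comp.
  move=> x y fx fy /= e; have [h1 _ _ _ _] := eh.
  by apply: hI => //; apply: fI => //; apply: h1.
move=> y fy; have [z fz <-] := fS y fy; have [x fx <-] := hS z fz; by exists x.
Qed.

Lemma gsubst_fixed (g : nat -> gT) x : gfin x ->
  (forall A, x A != 0 -> {in A, g =1 gen F}) -> gsubst g x = x.
Proof.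
move=> fx gx; have [S uS cS] := gfin_supported fx.
rewrite (gsubstE g uS cS) [RHS](glin_monE uS cS); apply: eq_gsum => A.
have [->|xA] := eqVneq (x A) 0; first by rewrite !gscale0.
by rewrite (eq_gmonomial (gx A xA)) gmonomial_gen.
Qed.

Section CharNot2.
Hypothesis two0 : (2%:R : F) != 0.

Lemma gmul_odd_sq x : godd x -> gmul x x = gzero.
Proof.
move=> ox; apply: functional_extensionality => C.
have /(congr1 (fun f => f C)) := gmul_oddC ox ox.
rewrite /gopp /gscale /gzero mulN1r => /eqP; rewrite -subr_eq0 opprK -mulr2n.
by rewrite -mulr_natr mulf_eq0 (negbTE two0) orbF => /eqP.
Qed.

Section OddFamily.
Variable g : nat -> gT.
Hypothesis godd_g : forall i, godd (g i).

Let gfin_g i : gfin (g i) := (godd_g i).1.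
Let gfin_gm X : gfin (gmonomial g X) := gfin_gmonomial X gfin_g.

Lemma gmul_gen_gmonomial a B : gmul (g a) (gmonomial g B) =
  if a \in B then gzero
  else gscale ((-1) ^+ ginv [fset a] B) (gmonomial g (a |` B)).
Proof.
elim/fset_ind_min: B a => [|b X hX IH] a.
  by rewrite in_fset0 gmonomial0 gmul1r ginv1_min // expr0 gscale1 fsetU0 gmonomial1.
rewrite gmonomial_fset1U_min // -gmulA //.
case: (eqVneq a b) => [->|nab]; first by rewrite gmul_odd_sq // gmul0l !inE eqxx.
case: (ltngtP a b) => [ab|ba|eab]; last by rewrite eab eqxx in nab.
- have aX : a \notin b |` X.
    by rewrite !inE negb_or neq_ltn ab min_notin // => x /hX; apply: ltn_trans.
  have hbX x : x \in b |` X -> (a < x)%N.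
    by rewrite !inE => /orP [/eqP ->|/hX]; [|apply: ltn_trans].
  rewrite (negbTE aX) ginv1_min // expr0 gscale1 gmonomial_fset1U_min //.
  by rewrite gmonomial_fset1U_min // gmulA.
- rewrite (gmul_oddC (godd_g a) (godd_g b)) /gopp gmul_scalel gmulA // IH.
  rewrite !inE (gtn_eqF ba) /=; case: ifP => aX; first by rewrite gmul0r gscaler0.
  rewrite gmul_scaler gscaleA ginvUr ?fdisjoint1X ?min_notin // ginv11 ba exprD expr1.
  rewrite fsetUCA [in RHS]gmonomial_fset1U_min //.
  by move=> x; rewrite !inE => /orP [/eqP ->|/hX] //; rewrite ltn_neqAle eq_sym aX.
Qed.

Lemma gmul_gmonomial A B : gmul (gmonomial g A) (gmonomial g B) =
  if [disjoint A & B]%fset then gscale ((-1) ^+ ginv A B) (gmonomial g (A `|` B))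
  else gzero.
Proof.
elim/fset_ind_min: A B => [|a X hX IH] B.
  by rewrite gmonomial0 gmul1l fdisjoint0X ginv0l expr0 gscale1 fset0U.
rewrite gmonomial_fset1U_min // gmulA // IH fdisjointUX fdisjoint1X.
case: (boolP [disjoint X & B]%fset) => dXB; last by rewrite gmul0r andbF.
rewrite gmul_scaler gmul_gen_gmonomial in_fsetU (negbTE (min_notin hX)) andbT.
case: (boolP (a \in B)) => aB /=; first by rewrite gscaler0.
rewrite gscaleA ginvUr // ginvUl ?fdisjoint1X ?min_notin // ginv1_min // add0n.
by rewrite fsetUA -exprD addnC.
Qed.

Lemma gsubst_mul x y :
  gfin x -> gfin y -> gsubst g (gmul x y) = gmul (gsubst g x) (gsubst g y).
Proof.
move=> fx fy.
have [S uS cS] := gfin_supported fx; have [T uT cT] := gfin_supported fy.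
have fmm A B : gfin (gmul (gmon A) (gmon B)) by apply: gfin_mul; apply: gfin_mon.
rewrite (gsubstE g uS cS) (gsubstE g uT cT) gmul_glin.
rewrite {1}(glin_monE uS cS) {1}(glin_monE uT cT) gmul_glin gsubst_sum; last first.
  by move=> A; apply: gfin_sum => B; apply: gfin_scale.
apply: eq_gsum => A; rewrite gsubst_sum; last by move=> B; apply: gfin_scale.
apply: eq_gsum => B; rewrite gsubst_scale // gmul_mon gmul_gmonomial.
by case: ifP => _; rewrite ?gsubst_zero // gsubst_scale ?gsubst_mon //; apply: gfin_mon.
Qed.

Lemma alg_endo_gsubst : alg_endo (gsubst g).
Proof.
split.
- by move=> x _; apply: gfin_gsubst.
- exact: gsubst_add.
- by move=> c x; apply: gsubst_scale.
- by move=> x y; apply: gsubst_mul.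
- exact: gsubst_one.
Qed.

End OddFamily.

Lemma gsubst_genK (g h : nat -> gT) :
  (forall i, godd (g i)) -> (forall i, godd (h i)) ->
  (forall i, gsubst g (h i) = gen F i) -> forall x, gfin x -> gsubst g (gsubst h x) = x.
Proof.
move=> oddg oddh gh x fx.
have := eq_alg_endo (alg_endo_comp (alg_endo_gsubst oddg) (alg_endo_gsubst oddh)).
by apply=> //= i; rewrite gsubst_gen.
Qed.

Lemma alg_aut_gsubst (g h : nat -> gT) :
  (forall i, godd (g i)) -> (forall i, godd (h i)) ->
  (forall i, gsubst g (h i) = gen F i) -> (forall i, gsubst h (g i) = gen F i) ->
  alg_aut (gsubst g).
Proof.
move=> oddg oddh gh hg; split; first exact: alg_endo_gsubst.
  by move=> x y fx fy exy; rewrite -(gsubst_genK oddh oddg hg fx) exy gsubst_genK.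
move=> y fy; exists (gsubst h y); last exact: gsubst_genK.
by apply: gfin_gsubst => i; case: (oddh i).
Qed.

Definition gsign_gen (D : pred nat) (i : nat) : gT :=
  if D i then gopp (gen F i) else gen F i.

Definition gsign (D : pred nat) : gT -> gT := gsubst (gsign_gen D).

Definition nodd (D : pred nat) (A : {fset nat}) := #|` [fset a in A | D a]|.

Lemma nodd_fset1U D b X : b \notin X -> nodd D (b |` X) = (D b + nodd D X)%N.
Proof.
move=> bX; rewrite /nodd; case: (boolP (D b)) => Db /=.
  rewrite (_ : 1%N = (b \notin [fset a in X | D a])); last by rewrite !inE (negbTE bX).
  rewrite -cardfsU1; congr (#|` _|); apply/fsetP => x; rewrite !inE.
  by case: (eqVneq x b) => [->|].
rewrite add0n; congr (#|` _|); apply/fsetP => x; rewrite !inE.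
by case: (eqVneq x b) => [->|] //=; rewrite (negbTE Db) (negbTE bX).
Qed.

Lemma gmonomial_gsign_gen D A :
  gmonomial (gsign_gen D) A = gscale ((-1) ^+ nodd D A) (gmon A).
Proof.
elim/fset_ind_min: A => [|b X hX IH].
  rewrite gmonomial0 /nodd (_ : [fset a in fset0 | D a] = fset0) ?cardfs0 ?gscale1 //.
  by apply/fsetP => x; rewrite !inE.
rewrite gmonomial_fset1U_min // IH nodd_fset1U ?min_notin // exprD gmul_scaler.
rewrite (_ : gsign_gen D b = gscale ((-1) ^+ D b) (gmon [fset b])); last first.
  by rewrite /gsign_gen; case: (D b); rewrite ?expr1 ?expr0 ?gscale1.
rewrite gmul_scalel gscaleA gmul_mon fdisjoint1X min_notin // ginv1_min //.
by rewrite expr0 gscale1 mulrC.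
Qed.

Lemma gsignE D x : gfin x -> gsign D x = fun C => (-1) ^+ nodd D C * x C.
Proof.
move=> fx; have [S uS cS] := gfin_supported fx.
set y := fun C => _.
have cy : gsupported S y by move=> A AS; rewrite /y cS // mulr0.
rewrite /gsign (gsubstE _ uS cS) [RHS](glin_monE uS cy) /glin.
by apply: eq_gsum => A; rewrite gmonomial_gsign_gen gscaleA /y mulrC.
Qed.

Lemma godd_gsign_gen D i : godd (gsign_gen D i).
Proof. by rewrite /gsign_gen; case: (D i); [apply: godd_scale|]; apply: godd_gen. Qed.

Lemma alg_endo_gsign D : alg_endo (gsign D).
Proof. exact: (alg_endo_gsubst (godd_gsign_gen D)). Qed.

Lemma hom_compE D b y :
  hom_comp D b y <-> gfin y /\ gsign D y = (if b then gopp y else y).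
Proof.
have sign_eq (c : F) : c != 0 -> (- c == c) = false.
  move=> c0; rewrite -subr_eq0 -opprD oppr_eq0 -mulr2n -mulr_natr mulf_eq0.
  by rewrite (negbTE c0) (negbTE two0).
split.
  case=> fy hy; split => //; rewrite gsignE //; apply: functional_extensionality => C.
  have [yC0|yC] := eqVneq (y C) 0; first by case: (b); rewrite /gopp /gscale yC0 !mulr0.
  rewrite /nodd -signr_odd (hy C yC).
  by case: b {hy}; rewrite /gopp /gscale ?expr1 ?expr0 ?mul1r.
case=> fy; rewrite gsignE // => e; split => // A yA.
have := congr1 (fun f => f A) e; rewrite -[X in X * _]signr_odd /gopp /gscale.
case: b {e}; case: (odd _) => //=; rewrite ?expr1 ?expr0 !(mul1r, mulN1r) => /eqP.
  by rewrite eq_sym sign_eq.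
by rewrite sign_eq.
Qed.

Lemma z2_maps_conj (phi psi : gT -> gT) (D : pred nat) : alg_aut psi ->
  (forall x, gfin x -> gfin (phi x)) ->
  (forall x, gfin x -> psi (phi x) = gsign D (psi x)) -> z2_maps phi psi D.
Proof.
case=> [[p1 _ p3 _ _] pinj psurj] fphi comm; split.
  move=> b x [fx ex]; apply/hom_compE; split; first exact: p1.
  by rewrite -comm // ex; case: (b) => //; exact: p3.
move=> b y /hom_compE [fy ey]; have [x fx exy] := psurj y fy.
exists x => //; split => //; apply: pinj => //; first exact: fphi.
  by case: (b) {ey}; rewrite // /gopp; apply: gfin_scale.
by rewrite comm // exy ey; case: (b) => //; rewrite /gopp p3 // exy.
Qed.

Lemma gsign_relabel (D Q : pred nat) (s t : nat -> nat) :
  cancel s t -> cancel t s -> (forall i, Q (s i) = D i) ->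
  let sigma := gsubst (fun i => gen F (s i)) in
  alg_aut sigma /\ forall x, gfin x -> sigma (gsign D x) = gsign Q (sigma x).
Proof.
move=> st ts QsD sigma.
have oddS i : godd (gen F (s i)) by apply: godd_gen.
split.
  apply: (alg_aut_gsubst oddS (fun i => godd_gen (t i))) => i.
    by rewrite gsubst_gen ts.
  by rewrite gsubst_gen st.
apply: eq_alg_endo.
- exact: (alg_endo_comp (alg_endo_gsubst oddS) (alg_endo_gsign D)).
- exact: (alg_endo_comp (alg_endo_gsign Q) (alg_endo_gsubst oddS)).
move=> i /=; rewrite /sigma /gsign !gsubst_gen /gsign_gen QsD.
case: (D i); last by rewrite gsubst_gen.
by rewrite /gopp gsubst_scale ?gsubst_gen //; exact: gfin_gen.
Qed.

Lemma z2_iso_conj (phi psi : gT -> gT) (D Q : pred nat) : alg_aut phi -> alg_aut psi ->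
  (forall x, gfin x -> psi (phi x) = gsign D (psi x)) -> relabelling D Q -> z2_iso phi Q.
Proof.
move=> [[fphi _ _ _ _] _ _] apsi conj [s [t [st ts QsD]]].
have [asigma sigma_conj] := gsign_relabel st ts QsD.
have [[fpsi _ _ _ _] _ _] := apsi.
exists (gsubst (fun i => gen F (s i)) \o psi); split; first exact: alg_aut_comp.
apply: z2_maps_conj (alg_aut_comp asigma apsi) fphi _ => x fx /=.
by rewrite conj // sigma_conj //; apply: fpsi.
Qed.

Section Untwisting.
Variables (Ip Im : pred nat) (d : nat -> gT) (phi : gT -> gT).
Let I i := Ip i || Im i.
Hypothesis IpIm_disjoint : forall i, ~~ (Ip i && Im i).
Hypothesis d_spec : forall j, ~~ I j ->
  gfin (d j) /\ forall A, d j A != 0 ->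
    [/\ odd #|` A|, (forall a, a \in A -> I a) & ~~ odd #|` [fset a in A | Im a]|].
Hypothesis phi_endo : alg_endo phi.
Hypothesis phi_Ip : forall i, Ip i -> phi (gen F i) = gen F i.
Hypothesis phi_Im : forall i, Im i -> phi (gen F i) = gopp (gen F i).
Hypothesis phi_J : forall j, ~~ I j ->
  phi (gen F j) = gadd (gopp (gen F j)) (gscale 2 (d j)).

Definition untwist_gen (c : F) (i : nat) : gT :=
  if I i then gen F i else gadd (gen F i) (gscale c (d i)).

Definition untwist := gsubst (untwist_gen 1).

Definition odd_letters (i : nat) := Im i || ~~ I i.

Let gfin_d j : ~~ I j -> gfin (d j). Proof. by case/d_spec. Qed.

Lemma godd_untwist_gen c i : godd (untwist_gen c i).
Proof.
rewrite /untwist_gen; case: ifP => Ii; first exact: godd_gen.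
have [fd dA] := d_spec (negbT Ii).
by apply/godd_add/godd_scale; [exact: godd_gen | split=> // A /dA []].
Qed.

Lemma gsubst_d (g : nat -> gT) j : (forall a, I a -> g a = gen F a) -> ~~ I j ->
  gsubst g (d j) = d j.
Proof.
move=> gI Jj; apply: gsubst_fixed => [|A /(d_spec Jj).2 [_ AI _] a /AI]; last exact: gI.
exact: gfin_d.
Qed.

Lemma gsubst_untwist_gen c c' i :
  gsubst (untwist_gen c) (untwist_gen c' i) = untwist_gen (c + c') i.
Proof.
rewrite /untwist_gen; case: ifP => Ii; first by rewrite gsubst_gen /untwist_gen Ii.
have fd := gfin_d (negbT Ii).
rewrite gsubst_add; [|exact: gfin_gen|exact: gfin_scale].
rewrite gsubst_scale // gsubst_gen gsubst_d => [|a Ia|]; last 2 first.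
- by rewrite /untwist_gen Ia.
- by rewrite Ii.
rewrite /untwist_gen Ii.
by apply: functional_extensionality => C; rewrite /gadd /gscale; ring.
Qed.

Lemma untwist_gen0 i : untwist_gen 0 i = gen F i.
Proof.
rewrite /untwist_gen; case: ifP => // _; rewrite gscale0.
by apply: functional_extensionality => C; rewrite /gadd /gzero addr0.
Qed.

Lemma alg_aut_untwist : alg_aut untwist.
Proof.
by apply: (alg_aut_gsubst (godd_untwist_gen 1) (godd_untwist_gen (-1))) => i;
  rewrite gsubst_untwist_gen ?subrr ?addNr untwist_gen0.
Qed.

Lemma gsign_d j : ~~ I j -> gsign odd_letters (d j) = d j.
Proof.
move=> Jj; rewrite gsignE; last exact: gfin_d.
apply: functional_extensionality => C.
have [->|/(d_spec Jj).2 [_ CI evenIm]] := eqVneq (d j C) 0; first by rewrite mulr0.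
rewrite /nodd (_ : [fset a in C | odd_letters a] = [fset a in C | Im a]).
  by rewrite -signr_odd (negbTE evenIm) mul1r.
apply/fsetP => a; rewrite !inE /odd_letters.
by case: (boolP (a \in C)) => //= /CI ->; rewrite orbF.
Qed.

Lemma untwist_conj x : gfin x -> untwist (phi x) = gsign odd_letters (untwist x).
Proof.
apply: (eq_alg_endo (f1 := untwist \o phi) (f2 := gsign odd_letters \o untwist)) => [||i].
- exact: (alg_endo_comp (alg_endo_gsubst (godd_untwist_gen 1)) phi_endo).
- exact: (alg_endo_comp (alg_endo_gsign odd_letters)
    (alg_endo_gsubst (godd_untwist_gen 1))).
have fe := gfin_gen i.
rewrite /= /untwist /gsign [gsubst _ (gen F i)]gsubst_gen /untwist_gen.
have [Ipi|Ipi] := boolP (Ip i).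
  have Imi : Im i = false by apply/negbTE; move: (IpIm_disjoint i); rewrite Ipi.
  by rewrite phi_Ip // /I Ipi !gsubst_gen /untwist_gen /gsign_gen /odd_letters /I Ipi Imi.
have [Imi|Imi] := boolP (Im i).
  rewrite phi_Im // /gopp gsubst_scale // /I Imi orbT !gsubst_gen /untwist_gen /gsign_gen.
  by rewrite /odd_letters /I Imi orbT.
have Ji : ~~ I i by rewrite /I negb_or Ipi Imi.
have fd := gfin_d Ji.
rewrite (negbTE Ji) phi_J // /gopp gsubst_add; [|exact: gfin_scale..].
rewrite !gsubst_scale // gsubst_d => [|a Ia|//]; last by rewrite Ia.
rewrite gsubst_add; [|by []|exact: gfin_scale].
rewrite gsubst_scale // !gsubst_gen /untwist_gen (negbTE Ji).
rewrite (_ : gsubst _ (d i) = gsign odd_letters (d i)) // gsign_d //.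
rewrite /gsign_gen /odd_letters Ji orbT.
by apply: functional_extensionality => C; rewrite /gadd /gopp /gscale; ring.
Qed.
End Untwisting.
End CharNot2.
End Grassmann.

Theorem mainTheorem6 (F : fieldType) (char0 : [pchar F] =i pred0)
  (Ip Im : pred nat) (d : nat -> gT F) (phi : gT F -> gT F) :
  (* I = Ip u Im, a disjoint union *)
  (forall i, ~~ (Ip i && Im i)) ->
  let I := fun i => Ip i || Im i in
  (* I is infinite *)
  (forall n, exists m, (n <= m)%N /\ I m) ->
  (* I is a proper subset of N *)
  (exists j, ~~ I j) ->
  (* conditions on d_j, j in J = N \ I *)
  (forall j, ~~ I j ->
     gfin (d j) /\
     forall A, d j A != 0 ->
       [/\ odd #|` A|, (forall a, a \in A -> I a)
         & ~~ odd #|` [fset a in A | Im a]|]) ->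
  (* phi is an involutive automorphism of E with the given values *)
  alg_aut phi ->
  (forall x, gfin x -> phi (phi x) = x) ->
  (forall i, Ip i -> phi (gen F i) = gen F i) ->
  (forall i, Im i -> phi (gen F i) = gopp (gen F i)) ->
  (forall j, ~~ I j ->
     phi (gen F j) = gadd (gopp (gen F j)) (gscale 2 (d j))) ->
  z2_iso phi deg_Einf \/ (exists k, z2_iso phi (deg_Ekstar k))
    \/ (exists k, z2_iso phi (deg_Ek k)).
Proof.
move=> IpIm_disjoint I _ _ d_spec phi_aut _ phi_Ip phi_Im phi_J.
have two0 : (2%:R : F) != 0 by rewrite ((pcharf0P F).1 char0).
have [phi_endo _ _] := phi_aut.
have conj := untwist_conj two0 IpIm_disjoint d_spec phi_endo phi_Ip phi_Im phi_J.
have z2 := z2_iso_conj two0 phi_aut (alg_aut_untwist two0 d_spec) conj.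
have [|[[k]|[k]]] := relabelling_standard (odd_letters Ip Im).
- by left; apply: z2.
- by right; left; exists k; apply: z2.
- by right; right; exists k; apply: z2.
Qed.
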